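(* Let $p\ge0$, $m\ge1$ be integers and, for $j\ge p$, let $\omega_j=\omega_j^{p,m}=\frac{\sqrt{j!\,(j+m)!}}{(j-p)!}$. Let $\breve{\mathbb{H}}$ be the backward weighted shift on $\mathbb{B}_p$ defined by $\breve{\mathbb{H}}e_p=0$ and $\breve{\mathbb{H}}e_k=\omega_{k-1}e_{k-1}$ for $k>p$, i.e. $$\breve{\mathbb{H}}\Big(\sum_{k\ge p}a_ke_k\Big)=\sum_{k\ge p}\omega_k a_{k+1}e_k,$$ with maximal domain $D(\breve{\mathbb{H}})=\{\phi\in\mathbb{B}_p:\breve{\mathbb{H}}\phi\in\mathbb{B}_p\}$. (Equivalently $\breve{\mathbb{H}}=a^{*p}a^{p+m}\mathbb{U}$ restricted to $\mathbb{B}_p$, where $\mathbb{U}e_k=e_{k+m-1}$.) Then $\breve{\mathbb{H}}$ is chaotic on $\mathbb{B}_p$.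
   Context: The Bargmann space $\mathbb{B}$ is the Hilbert space of entire functions with $\|\phi\|^2=\int_{\mathbb{C}}|\phi(z)|^2e^{-|z|^2}dx\,dy<\infty$; $e_k(z)=z^k/\sqrt{k!}$ is an orthonormal basis; $a\phi=\phi'$, $a^*\phi=z\phi$. $\mathbb{B}_p$ is the closed subspace spanned by $\{e_k:k\ge p\}$. Definition (Devaney): a densely defined linear operator $T$ on a Banach space $X$ is chaotic if (1) $T^n$ is closed for every positive integer $n$; (2) there is $\phi\in\bigcap_{n\ge1}D(T^n)$ whose orbit $\{\phi,T\phi,T^2\phi,\dots\}$ is dense in $X$; (3) the set of periodic points $\{\phi\in X:\exists j\in\mathbb{N},\ T^j\phi=\phi\}$ is dense in $X$. *)

From Stdlib Require Import Reals Lra Lia Arith Factorial.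
Open Scope R_scope.

Definition Cx := (R * R)%type.
Definition Csub (u v : Cx) : Cx := (fst u - fst v, snd u - snd v).
Definition Cscal (r : R) (u : Cx) : Cx := (r * fst u, r * snd u).
Definition Cnorm2 (u : Cx) : R := fst u ^ 2 + snd u ^ 2.
Definition C0 : Cx := (0, 0).

(* An element of the Bargmann space B is identified with its coefficient
   sequence (a_k) in the orthonormal basis e_k(z) = z^k/sqrt(k!):
   phi = sum_k a_k e_k, ||phi||^2 = sum_k |a_k|^2. *)
Definition cseq := nat -> Cx.

Definition sq_summable (a : cseq) : Prop :=
  exists l, infinite_sum (fun k => Cnorm2 (a k)) l.

(* B_p : closed span of {e_k : k >= p}. *)
Definition in_Bp (p : nat) (a : cseq) : Prop :=
  sq_summable a /\ forall k, (k < p)%nat -> a k = C0.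

Definition dist2_le (a b : cseq) (eps : R) : Prop :=
  forall N, sum_f_R0 (fun k => Cnorm2 (Csub (a k) (b k))) N <= eps.

Definition conv (xs : nat -> cseq) (x : cseq) : Prop :=
  forall eps, eps > 0 -> exists J, forall j, (j >= J)%nat -> dist2_le (xs j) x eps.

Fixpoint dom_pow (X D : cseq -> Prop) (T : cseq -> cseq) (n : nat) (x : cseq) : Prop :=
  match n with
  | O => X x
  | S n' => D x /\ dom_pow X D T n' (T x)
  end.

Fixpoint iterT (T : cseq -> cseq) (n : nat) (x : cseq) : cseq :=
  match n with
  | O => x
  | S n' => iterT T n' (T x)
  end.

Definition dense_in (X S : cseq -> Prop) : Prop :=
  forall x eps, X x -> eps > 0 -> exists y, S y /\ dist2_le y x eps.

Definition closed_pow (X D : cseq -> Prop) (T : cseq -> cseq) (n : nat) : Prop :=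
  forall (xs : nat -> cseq) x y,
    (forall j, dom_pow X D T n (xs j)) -> X x -> X y ->
    conv xs x -> conv (fun j => iterT T n (xs j)) y ->
    dom_pow X D T n x /\ (forall k, iterT T n x k = y k).

(* Devaney chaos of the densely defined operator (T, D) on X. *)
Definition chaotic (X D : cseq -> Prop) (T : cseq -> cseq) : Prop :=
  (forall x, D x -> X x) /\
  dense_in X D /\
  (forall n, (n >= 1)%nat -> closed_pow X D T n) /\
  (exists phi, (forall n, (n >= 1)%nat -> dom_pow X D T n phi) /\
     dense_in X (fun x => exists n, forall k, iterT T n phi k = x k)) /\
  dense_in X (fun x => X x /\ exists j, (j >= 1)%nat /\ dom_pow X D T j x /\
                                   forall k, iterT T j x k = x k).

(* omega_j = sqrt(j! (j+m)!) / (j-p)!  (used for j >= p). *)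
Definition omega (p m j : nat) : R :=
  sqrt (INR (fact j * fact (j + m))) / INR (fact (j - p)).

Definition Hbreve (p m : nat) (a : cseq) : cseq :=
  fun k => if Nat.ltb k p then C0 else Cscal (omega p m k) (a (S k)).

Definition dom_H (p m : nat) (a : cseq) : Prop :=
  in_Bp p a /\ in_Bp p (Hbreve p m a).

(* The theorem holds for every backward weighted shift on B_p whose weights
   satisfy w_l >= 1, and w_l >= 2 from l = p + 3 on; omega is such a weight.
   Iterates act coordinatewise, (H^n a)_k = w_k ... w_(k+n-1) a_(k+n), and these
   products grow at least like 2^n.  Coordinatewise limits then give closedness of
   each H^n.  A periodic point of period N is obtained by prescribing a on
   [p, p+N) and continuing it by a_(k+N) = a_k / (w_k ... w_(k+N-1)); the growth
   of the weights makes it a small perturbation of the truncation of a.  A vector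
   with dense orbit is obtained by enumerating the finitely supported vectors
   with rational entries and placing the i-th one, divided by the appropriate
   weight products, in a block far out: H^(block_start i) moves it back to the
   front while all later blocks contribute a geometrically small tail. *)

From Stdlib Require Import Reals Lra Lia Cantor Factorial FunctionalExtensionality.
Open Scope R_scope.

Lemma Cnorm2_ge0 u : 0 <= Cnorm2 u.
Proof. unfold Cnorm2. nra. Qed.

Lemma Cnorm2_C0 : Cnorm2 C0 = 0.
Proof. unfold Cnorm2, C0; simpl; ring. Qed.

Lemma Csub_C0 u : Csub u C0 = u.
Proof. destruct u; unfold Csub, C0; simpl; f_equal; ring. Qed.

Lemma Csub_diag u : Csub u u = C0.
Proof. unfold Csub, C0; f_equal; ring. Qed.

Lemma Cnorm2_Csub_sym u v : Cnorm2 (Csub u v) = Cnorm2 (Csub v u).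
Proof. unfold Cnorm2, Csub; simpl; ring. Qed.

Lemma Cnorm2_Csub_triangle u v w :
  Cnorm2 (Csub u w) <= 2 * Cnorm2 (Csub u v) + 2 * Cnorm2 (Csub v w).
Proof.
  destruct u as [u1 u2], v as [v1 v2], w as [w1 w2]; unfold Cnorm2, Csub; simpl.
  pose proof (pow2_ge_0 (u1 - 2 * v1 + w1)). pose proof (pow2_ge_0 (u2 - 2 * v2 + w2)).
  nra.
Qed.

Lemma Cnorm2_Cscal r u : Cnorm2 (Cscal r u) = r ^ 2 * Cnorm2 u.
Proof. unfold Cnorm2, Cscal; simpl; ring. Qed.

Lemma Csub_Cscal r u v : Csub (Cscal r u) (Cscal r v) = Cscal r (Csub u v).
Proof. unfold Csub, Cscal; simpl; f_equal; ring. Qed.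

Lemma Cscal_1 u : Cscal 1 u = u.
Proof. destruct u; unfold Cscal; simpl; f_equal; ring. Qed.

Lemma Cscal_Cscal r s u : Cscal r (Cscal s u) = Cscal (r * s) u.
Proof. unfold Cscal; simpl; f_equal; ring. Qed.

Lemma Cscal_C0 r : Cscal r C0 = C0.
Proof. unfold Cscal, C0; simpl; f_equal; ring. Qed.

Definition Cx_lim (c : nat -> Cx) (u : Cx) : Prop :=
  forall eps, eps > 0 -> exists J, forall j, (J <= j)%nat -> Cnorm2 (Csub (c j) u) <= eps.

Lemma Cx_lim_unique c u v : Cx_lim c u -> Cx_lim c v -> u = v.
Proof.
  intros Hu Hv.
  assert (Hsmall : forall eps, eps > 0 -> Cnorm2 (Csub u v) <= eps).
  { intros eps He.
    destruct (Hu (eps / 4)) as [J1 H1], (Hv (eps / 4)) as [J2 H2]; try lra.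
    specialize (H1 (max J1 J2) ltac:(lia)); specialize (H2 (max J1 J2) ltac:(lia)).
    pose proof (Cnorm2_Csub_triangle u (c (max J1 J2)) v).
    rewrite Cnorm2_Csub_sym in H1. lra. }
  assert (Hz : Cnorm2 (Csub u v) <= 0).
  { apply Rnot_lt_le; intro Hpos.
    specialize (Hsmall (Cnorm2 (Csub u v) / 2) ltac:(lra)). lra. }
  destruct u as [u1 u2], v as [v1 v2]; unfold Cnorm2, Csub in Hz; simpl in Hz.
  pose proof (pow2_ge_0 (u1 - v1)). pose proof (pow2_ge_0 (u2 - v2)).
  f_equal; nra.
Qed.

Lemma Cx_lim_Cscal r c u : Cx_lim c u -> Cx_lim (fun j => Cscal r (c j)) (Cscal r u).
Proof.
  intros Hc eps He.
  assert (Hr : 0 <= r ^ 2) by apply pow2_ge_0.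
  destruct (Hc (eps / (r ^ 2 + 1))) as [J HJ].
  { apply Rdiv_lt_0_compat; lra. }
  exists J. intros j Hj. rewrite Csub_Cscal, Cnorm2_Cscal.
  apply Rle_trans with (r ^ 2 * (eps / (r ^ 2 + 1))).
  - apply Rmult_le_compat_l; auto.
  - apply Rmult_le_reg_r with (r ^ 2 + 1); [lra|].
    replace (r ^ 2 * (eps / (r ^ 2 + 1)) * (r ^ 2 + 1)) with (r ^ 2 * eps) by (field; lra).
    nra.
Qed.

(** * Square-summable sequences *)

Definition bounded_sums (f : nat -> R) : Prop := exists B, forall N, sum_f_R0 f N <= B.

Lemma sum_f_R0_le_index f M N :
  (forall k, 0 <= f k) -> (M <= N)%nat -> sum_f_R0 f M <= sum_f_R0 f N.
Proof.
  intros Hf HMN. induction HMN as [|N _ IH]; [lra|].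
  simpl. specialize (Hf (S N)). lra.
Qed.

Lemma sq_summable_iff_bounded a : sq_summable a <-> bounded_sums (fun k => Cnorm2 (a k)).
Proof.
  assert (Hgrow : Un_growing (sum_f_R0 (fun k => Cnorm2 (a k)))).
  { intro n. simpl. pose proof (Cnorm2_ge0 (a (S n))). lra. }
  split.
  - intros [l Hl]. exists l. intro N. apply growing_ineq; auto.
  - intros [B HB]. destruct (growing_cv _ Hgrow) as [l Hl].
    + exists B. intros x [n ->]. apply HB.
    + exists l. exact Hl.
Qed.

Lemma bounded_sums_le f g : (forall k, f k <= g k) -> bounded_sums g -> bounded_sums f.
Proof.
  intros Hfg [B HB]. exists B. intro N. eapply Rle_trans; [|apply (HB N)].
  apply sum_growing; auto.
Qed.

Lemma bounded_sums_shift f K :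
  (forall k, 0 <= f k) -> bounded_sums f -> bounded_sums (fun k => f (k + K)%nat).
Proof.
  revert f. induction K as [|K IH]; intros f Hf Hb.
  - eapply bounded_sums_le; [|exact Hb]. intro k. cbv beta. rewrite Nat.add_0_r. lra.
  - assert (HS : bounded_sums (fun k => f (S k))).
    { destruct Hb as [B HB]. exists B. intro N.
      rewrite <- (HB (S N)), (decomp_sum f (S N)) by lia. simpl pred.
      pose proof (Hf 0%nat). lra. }
    eapply bounded_sums_le; [|exact (IH _ (fun k => Hf (S k)) HS)].
    intro k. cbv beta. rewrite Nat.add_succ_r. lra.
Qed.

Lemma bounded_sums_unshift f K : bounded_sums (fun k => f (k + K)%nat) -> bounded_sums f.
Proof.
  revert f. induction K as [|K IH]; intros f Hb.
  - eapply bounded_sums_le; [|exact Hb]. intro k. cbv beta. rewrite Nat.add_0_r. lra.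
  - apply IH. destruct Hb as [B HB]. exists (Rabs (f K) + Rabs B). intro N.
    destruct N as [|N].
    + simpl. pose proof (Rle_abs (f K)). pose proof (Rabs_pos B). lra.
    + rewrite (decomp_sum _ (S N)) by lia. simpl pred.
      specialize (HB N). pose proof (Rle_abs (f K)). pose proof (Rle_abs B).
      rewrite Nat.add_0_l.
      rewrite (sum_eq _ (fun k => f (k + S K)%nat)) by (intros; f_equal; lia). lra.
Qed.

Lemma bounded_sums_eventually_le f g K :
  (forall k, 0 <= g k) -> bounded_sums g -> (forall k, (K <= k)%nat -> f k <= g k) ->
  bounded_sums f.
Proof.
  intros Hg Hb Hfg. apply (bounded_sums_unshift _ K).
  eapply bounded_sums_le; [|exact (bounded_sums_shift g K Hg Hb)].
  intro k. apply Hfg. lia.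
Qed.

Lemma sq_summable_finite_support a L : (forall k, (L <= k)%nat -> a k = C0) -> sq_summable a.
Proof.
  intro Ha. apply sq_summable_iff_bounded.
  apply (bounded_sums_eventually_le _ (fun _ => 0) L); [intro; lra| |].
  - exists 0. intro N. rewrite sum_cte. lra.
  - intros k Hk. rewrite Ha by auto. rewrite Cnorm2_C0. lra.
Qed.

Lemma sq_summable_coord_bound a : sq_summable a -> exists B, forall k, Cnorm2 (a k) <= B.
Proof.
  intro Ha. apply sq_summable_iff_bounded in Ha as [B HB]. exists B. intro k.
  eapply Rle_trans; [|apply (HB k)].
  destruct k as [|k]; simpl; [lra|].
  pose proof (cond_pos_sum (fun j => Cnorm2 (a j)) k (fun j => Cnorm2_ge0 (a j))). lra.
Qed.

Lemma sum_le_shifted f h K N :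
  (forall k, (k < K)%nat -> f k = 0) -> (forall j, 0 <= h j) -> (forall j, f (j + K)%nat <= h j) ->
  sum_f_R0 f N <= sum_f_R0 h N.
Proof.
  revert f N. induction K as [|K IH]; intros f N Hlow Hh Hf.
  - apply sum_growing. intro k. specialize (Hf k). rewrite Nat.add_0_r in Hf. exact Hf.
  - destruct N as [|N].
    + simpl. rewrite Hlow by lia. apply Hh.
    + rewrite (decomp_sum f (S N)) by lia. simpl pred. rewrite Hlow by lia.
      apply Rle_trans with (sum_f_R0 h N).
      * rewrite Rplus_0_l. apply IH; auto.
        -- intros k Hk. apply Hlow. lia.
        -- intro j. rewrite <- Nat.add_succ_r. apply Hf.
      * apply sum_f_R0_le_index; auto.
Qed.

Lemma sum_geometric_half C N : 0 <= C -> sum_f_R0 (fun k => C * (1 / 2) ^ k) N <= 2 * C.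
Proof.
  intro HC. rewrite (sum_eq _ (fun k => (1 / 2) ^ k * C)) by (intros; ring).
  rewrite <- scal_sum, tech3 by lra.
  assert (0 < (1 / 2) ^ S N) by (apply pow_lt; lra).
  replace ((1 - (1 / 2) ^ S N) / (1 - 1 / 2)) with (2 - 2 * (1 / 2) ^ S N) by field.
  nra.
Qed.

Lemma pow_half_inv n : (1 / 2) ^ n = / 2 ^ n.
Proof. rewrite <- pow_inv. f_equal. lra. Qed.

Lemma pow_half_antimono a b : (a <= b)%nat -> (1 / 2) ^ b <= (1 / 2) ^ a.
Proof.
  intro Hab. rewrite !pow_half_inv. apply Rinv_le_contravar; [apply pow_lt; lra|].
  apply Rle_pow; [lra|auto].
Qed.

Lemma sum_f_R0_scal_l c f N : sum_f_R0 (fun k => c * f k) N = c * sum_f_R0 f N.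
Proof. induction N as [|N IH]; simpl; [|rewrite IH]; ring. Qed.
Lemma dist2_le_coord a b eps k : dist2_le a b eps -> Cnorm2 (Csub (a k) (b k)) <= eps.
Proof.
  intro Hd. eapply Rle_trans; [|apply (Hd k)].
  destruct k as [|k]; simpl; [lra|].
  pose proof (cond_pos_sum (fun j => Cnorm2 (Csub (a j) (b j))) k (fun j => Cnorm2_ge0 _)).
  lra.
Qed.

Lemma conv_coord xs x k : conv xs x -> Cx_lim (fun j => xs j k) (x k).
Proof.
  intros Hc eps He. destruct (Hc eps He) as [J HJ]. exists J. intros j Hj.
  apply dist2_le_coord, HJ. lia.
Qed.

Lemma dist2_le_triangle a b c e1 e2 :
  dist2_le a b e1 -> dist2_le b c e2 -> dist2_le a c (2 * e1 + 2 * e2).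
Proof.
  intros H1 H2 N. specialize (H1 N); specialize (H2 N).
  eapply Rle_trans.
  - apply sum_growing with (Bn := fun k => 2 * Cnorm2 (Csub (a k) (b k)) + 2 * Cnorm2 (Csub (b k) (c k))).
    intro k. apply Cnorm2_Csub_triangle.
  - rewrite plus_sum, !sum_f_R0_scal_l. lra.
Qed.

Lemma sq_summable_of_dist2_le a b e : sq_summable b -> dist2_le a b e -> sq_summable a.
Proof.
  intros Hb Hab. apply sq_summable_iff_bounded in Hb as [B HB].
  apply sq_summable_iff_bounded. exists (2 * e + 2 * B). intro N.
  specialize (Hab N); specialize (HB N).
  eapply Rle_trans.
  - apply sum_growing with (Bn := fun k => 2 * Cnorm2 (Csub (a k) (b k)) + 2 * Cnorm2 (b k)).
    intro k. pose proof (Cnorm2_Csub_triangle (a k) (b k) C0) as Htri.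
    rewrite !Csub_C0 in Htri. exact Htri.
  - rewrite plus_sum, !sum_f_R0_scal_l. lra.
Qed.

Lemma dist2_le_geometric a b K C :
  0 <= C -> (forall k, (k < K)%nat -> a k = b k) ->
  (forall k, (K <= k)%nat -> Cnorm2 (Csub (a k) (b k)) <= C * (1 / 2) ^ (k - K)) ->
  dist2_le a b (2 * C).
Proof.
  intros HC Heq Hk N. eapply Rle_trans; [|apply (sum_geometric_half C N HC)].
  apply sum_le_shifted with K.
  - intros k Hlt. rewrite Heq, Csub_diag by auto. apply Cnorm2_C0.
  - intro j. apply Rmult_le_pos; auto. apply pow_le. lra.
  - intro j. specialize (Hk (j + K)%nat ltac:(lia)).
    replace (j + K - K)%nat with j in Hk by lia. exact Hk.
Qed.

Lemma dist2_le_finite a b L c :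
  0 <= c -> (forall k, (k < L)%nat -> Cnorm2 (Csub (a k) (b k)) <= c) ->
  (forall k, (L <= k)%nat -> a k = b k) -> dist2_le a b (INR L * c).
Proof.
  revert a b. induction L as [|L IH]; intros a b Hc Hlt Hge N.
  - rewrite (sum_eq _ (fun _ => 0)), sum_cte; [simpl; lra|].
    intros k _. rewrite Hge, Csub_diag by lia. apply Cnorm2_C0.
  - rewrite S_INR. destruct N as [|N].
    + simpl. specialize (Hlt 0%nat ltac:(lia)). pose proof (pos_INR L). nra.
    + rewrite (decomp_sum _ (S N)) by lia. simpl pred.
      specialize (IH (fun k => a (S k)) (fun k => b (S k)) Hc).
      assert (Hrest : sum_f_R0 (fun k => Cnorm2 (Csub (a (S k)) (b (S k)))) N <= INR L * c).
      { apply IH; intros k Hk; [apply Hlt | apply Hge]; lia. }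
      specialize (Hlt 0%nat ltac:(lia)). lra.
Qed.

Definition truncate (L : nat) (x : cseq) : cseq := fun k => if Nat.ltb k L then x k else C0.

Lemma sq_summable_truncate L x : sq_summable (truncate L x).
Proof.
  apply (sq_summable_finite_support _ L). intros k Hk. unfold truncate.
  replace (Nat.ltb k L) with false by (symmetry; apply Nat.ltb_ge; auto). reflexivity.
Qed.

Lemma truncate_close x eps :
  sq_summable x -> eps > 0 -> exists L, forall L', (L <= L')%nat -> dist2_le (truncate L' x) x eps.
Proof.
  intros [l Hl] He. destruct (Hl eps He) as [L HL]. exists (S L). intros L' HL' N.
  set (Sx := sum_f_R0 (fun k => Cnorm2 (x k))).
  assert (Hgrow : forall M M', (M <= M')%nat -> Sx M <= Sx M')
    by (intros; apply sum_f_R0_le_index; auto; intro; apply Cnorm2_ge0).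
  assert (Hsplit : forall M, sum_f_R0 (fun k => Cnorm2 (Csub (truncate L' x k) (x k))) M
                        = Sx M - Sx (min M (pred L'))).
  { induction M as [|M IH].
    - unfold truncate, Sx; simpl.
      replace (Nat.ltb 0 L') with true by (symmetry; apply Nat.ltb_lt; lia).
      rewrite Csub_diag, Cnorm2_C0. ring.
    - simpl sum_f_R0. rewrite IH. unfold truncate at 1.
      destruct (Nat.ltb (S M) L') eqn:E.
      + apply Nat.ltb_lt in E. rewrite Csub_diag, Cnorm2_C0.
        replace (min (S M) (pred L')) with (S M) by lia.
        replace (min M (pred L')) with M by lia. unfold Sx; simpl. ring.
      + apply Nat.ltb_ge in E. rewrite Cnorm2_Csub_sym, Csub_C0.
        replace (min (S M) (pred L')) with (min M (pred L')) by lia. unfold Sx; simpl. ring. }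
  rewrite Hsplit. destruct (Nat.le_gt_cases N (pred L')).
  - replace (min N (pred L')) with N by lia. lra.
  - replace (min N (pred L')) with (pred L') by lia.
    assert (HSl : Sx N <= l) by (apply growing_ineq; [intro n; apply Hgrow; lia | exact Hl]).
    specialize (HL (pred L') ltac:(lia)). unfold Rdist in HL. apply Rabs_def2 in HL.
    fold Sx in HL. lra.
Qed.

(** * Finitely supported rational vectors *)

(* [stream_nth n] reads [n = <a0, <a1, <a2, ...>>>] (Cantor pairing) as the
   stream [a0, a1, a2, ...]; [stream_code f N] encodes its first [N] terms. *)
Fixpoint stream_nth (n s : nat) : nat :=
  match s with
  | O => fst (Cantor.of_nat n)
  | S s' => stream_nth (snd (Cantor.of_nat n)) s'
  end.

Fixpoint stream_code (f : nat -> nat) (N : nat) : nat :=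
  match N with
  | O => O
  | S N' => Cantor.to_nat (f O, stream_code (fun s => f (S s)) N')
  end.

Lemma stream_nth_code N : forall f s, (s < N)%nat -> stream_nth (stream_code f N) s = f s.
Proof.
  induction N as [|N IH]; intros f s Hs; [lia|].
  destruct s as [|s]; cbn [stream_nth stream_code]; rewrite Cantor.cancel_of_to; auto.
  apply (IH (fun s => f (S s))). lia.
Qed.

Lemma Cantor_of_nat_le u : (fst (Cantor.of_nat u) <= u /\ snd (Cantor.of_nat u) <= u)%nat.
Proof.
  pose proof (Cantor.cancel_to_of u). destruct (Cantor.of_nat u) as [a b].
  pose proof (Cantor.to_nat_non_decreasing a b). simpl. lia.
Qed.

Lemma stream_nth_le s : forall n, (stream_nth n s <= n)%nat.
Proof.
  induction s as [|s IH]; intro n; simpl; [apply Cantor_of_nat_le|].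
  specialize (IH (snd (Cantor.of_nat n))). pose proof (Cantor_of_nat_le n). lia.
Qed.

Definition rat_of_code (u q : nat) : R :=
  (INR (fst (Cantor.of_nat u)) - INR (snd (Cantor.of_nat u))) / INR (S q).

Definition Cx_of_code (u q : nat) : Cx :=
  (rat_of_code (fst (Cantor.of_nat u)) q, rat_of_code (snd (Cantor.of_nat u)) q).

Definition Z_code (z : Z) : nat := Cantor.to_nat (Z.to_nat z, Z.to_nat (- z)).

Lemma rat_of_Z_code z q : rat_of_code (Z_code z) q = IZR z / INR (S q).
Proof.
  unfold rat_of_code, Z_code. rewrite Cantor.cancel_of_to. cbn [fst snd]. f_equal.
  destruct z as [|z|z]; cbn [Z.to_nat Z.opp]; rewrite ?INR_IPR; simpl; unfold IZR; lra.
Qed.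

Lemma INR_le_pow2 n : INR n <= 2 ^ n.
Proof.
  induction n as [|n IH]; [simpl; lra|].
  rewrite S_INR. simpl. pose proof (pow_R1_Rle 2 n ltac:(lra)). lra.
Qed.

Lemma rat_of_code_sq_le u q : rat_of_code u q ^ 2 <= 4 ^ u.
Proof.
  unfold rat_of_code. destruct (Cantor_of_nat_le u) as [Ha Hb].
  set (a := fst (Cantor.of_nat u)) in *. set (b := snd (Cantor.of_nat u)) in *.
  apply le_INR in Ha, Hb. pose proof (pos_INR a). pose proof (pos_INR b).
  pose proof (INR_le_pow2 u). pose proof (pos_INR q). rewrite S_INR.
  assert (Hq : 0 < / (INR q + 1) <= 1).
  { split; [apply Rinv_0_lt_compat; lra|]. rewrite <- Rinv_1. apply Rinv_le_contravar; lra. }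
  unfold Rdiv. rewrite Rpow_mult_distr. replace 4 with (2 * 2) by ring. rewrite Rpow_mult_distr.
  assert ((INR a - INR b) ^ 2 <= 2 ^ u * 2 ^ u) by nra.
  assert ((/ (INR q + 1)) ^ 2 <= 1) by nra.
  pose proof (pow2_ge_0 (INR a - INR b)). nra.
Qed.

Lemma Cx_of_code_bound u q : Cnorm2 (Cx_of_code u q) <= 2 * 4 ^ u.
Proof.
  unfold Cx_of_code, Cnorm2. cbn [fst snd]. destruct (Cantor_of_nat_le u) as [H1 H2].
  pose proof (rat_of_code_sq_le (fst (Cantor.of_nat u)) q).
  pose proof (rat_of_code_sq_le (snd (Cantor.of_nat u)) q).
  pose proof (Rle_pow 4 _ _ ltac:(lra) H1). pose proof (Rle_pow 4 _ _ ltac:(lra) H2). lra.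
Qed.

Lemma round_close r q : (IZR (up (r * INR (S q))) / INR (S q) - r) ^ 2 <= / INR (S q).
Proof.
  destruct (archimed (r * INR (S q))) as [H1 H2].
  set (z := up (r * INR (S q))) in *.
  assert (HQ : 1 <= INR (S q)) by (rewrite S_INR; pose proof (pos_INR q); lra).
  replace (IZR z / INR (S q) - r) with ((IZR z - r * INR (S q)) * / INR (S q)) by (field; lra).
  assert (Ht : 0 < IZR z - r * INR (S q) <= 1) by lra.
  set (t := IZR z - r * INR (S q)) in *. set (v := / INR (S q)).
  assert (0 < v <= 1).
  { split; [apply Rinv_0_lt_compat; lra|]. rewrite <- Rinv_1. apply Rinv_le_contravar; lra. }
  rewrite Rpow_mult_distr. assert (t ^ 2 <= 1) by nra. nra.
Qed.

(* Slot 0 of the code [i] is a lower bound for [i], slot 1 the length of the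
   vector, slot 2 the common denominator, and slots [3 + s] its entries. *)
Definition target (p i : nat) : cseq := fun k =>
  if (Nat.leb p k && Nat.ltb k (p + stream_nth i 1))%bool
  then Cx_of_code (stream_nth i (3 + (k - p))) (stream_nth i 2)
  else C0.

Lemma target_outside p i k : (k < p \/ p + i <= k)%nat -> target p i k = C0.
Proof.
  intro Hk. unfold target. pose proof (stream_nth_le 1 i).
  destruct (Nat.leb p k) eqn:E1, (Nat.ltb k (p + stream_nth i 1)) eqn:E2; auto.
  apply Nat.leb_le in E1. apply Nat.ltb_lt in E2. lia.
Qed.

Lemma target_bound p i k : Cnorm2 (target p i k) <= 2 * 4 ^ i.
Proof.
  unfold target. destruct (Nat.leb p k && Nat.ltb k (p + stream_nth i 1))%bool.
  - eapply Rle_trans; [apply Cx_of_code_bound|].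
    apply Rmult_le_compat_l; [lra|]. apply Rle_pow; [lra|apply stream_nth_le].
  - rewrite Cnorm2_C0. pose proof (pow_le 4 i ltac:(lra)). lra.
Qed.

Lemma target_approx p x L q J :
  in_Bp p x ->
  exists i, (J <= i)%nat /\ dist2_le (target p i) (truncate (p + L) x) (INR (p + L) * (2 / INR (S q))).
Proof.
  intros [_ Hxlow].
  set (round := fun r => up (r * INR (S q))).
  set (f := fun u => match u with
    | O => J | 1 => L | 2 => q
    | S (S (S s)) => Cantor.to_nat (Z_code (round (fst (x (p + s)%nat))),
                                    Z_code (round (snd (x (p + s)%nat))))
    end%nat).
  set (i := stream_code f (3 + L)).
  assert (Hslot : forall s, (s < 3 + L)%nat -> stream_nth i s = f s)
    by (intros; apply stream_nth_code; auto).
  exists i. split.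
  { pose proof (stream_nth_le 0 i) as H0. rewrite Hslot in H0 by lia. exact H0. }
  assert (HQ : 0 < / INR (S q)) by (apply Rinv_0_lt_compat, lt_0_INR; lia).
  apply dist2_le_finite; [unfold Rdiv; lra| |]; intros k Hk; unfold target, truncate;
    rewrite (Hslot 1%nat), (Hslot 2%nat) by lia; cbn [f].
  - replace (Nat.ltb k (p + L)) with true by (symmetry; apply Nat.ltb_lt; auto).
    destruct (Nat.leb p k) eqn:Ep; cbn [andb].
    + apply Nat.leb_le in Ep. replace (Nat.ltb k (p + L)) with true
        by (symmetry; apply Nat.ltb_lt; auto).
      rewrite (Hslot (3 + (k - p))%nat) by lia.
      change (3 + (k - p))%nat with (S (S (S (k - p)))). cbn [f].
      replace (p + (k - p))%nat with k by lia.
      unfold Cx_of_code, Cnorm2, Csub. rewrite Cantor.cancel_of_to. cbn [fst snd].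
      rewrite !rat_of_Z_code. unfold round.
      pose proof (round_close (fst (x k)) q). pose proof (round_close (snd (x k)) q).
      unfold Rdiv. lra.
    + apply Nat.leb_gt in Ep. rewrite Hxlow, Csub_diag, Cnorm2_C0 by auto. unfold Rdiv. lra.
  - replace (Nat.ltb k (p + L)) with false by (symmetry; apply Nat.ltb_ge; auto).
    rewrite Bool.andb_false_r. reflexivity.
Qed.

Lemma target_dense p x eps J :
  in_Bp p x -> eps > 0 -> exists i, (J <= i)%nat /\ dist2_le (target p i) x eps.
Proof.
  intros Hx He.
  destruct (truncate_close x (eps / 4) (proj1 Hx) ltac:(lra)) as [L HL].
  destruct (INR_unbounded (8 * INR (p + L) / eps)) as [q Hq].
  destruct (target_approx p x L q J Hx) as [i [HiJ Happrox]].
  exists i. split; auto.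
  assert (Hsmall : INR (p + L) * (2 / INR (S q)) <= eps / 4).
  { rewrite S_INR. pose proof (pos_INR (p + L)). pose proof (pos_INR q).
    apply Rmult_le_reg_r with (INR q + 1); [lra|].
    replace (INR (p + L) * (2 / (INR q + 1)) * (INR q + 1)) with (2 * INR (p + L))
      by (field; lra).
    assert (8 * INR (p + L) / eps * eps = 8 * INR (p + L)) by (field; lra).
    assert (8 * INR (p + L) < INR q * eps) by nra. nra. }
  pose proof (dist2_le_triangle _ _ _ _ _ Happrox (HL (p + L)%nat ltac:(lia))) as Hd.
  intro M. specialize (Hd M). lra.
Qed.

(** * Weighted backward shifts *)

Lemma dom_pow_of_iterates (X D : cseq -> Prop) T n x :
  (forall y, X y -> X (T y) -> D y) ->
  (forall i, (i <= n)%nat -> X (iterT T i x)) -> dom_pow X D T n x.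
Proof.
  intro HD. revert x. induction n as [|n IH]; intros x Hit; simpl.
  - apply (Hit 0%nat). lia.
  - split.
    + apply HD; [apply (Hit 0%nat) | apply (Hit 1%nat)]; lia.
    + apply IH. intros i Hi. apply (Hit (S i)). lia.
Qed.

Definition wshift (p : nat) (w : nat -> R) (a : cseq) : cseq :=
  fun k => if Nat.ltb k p then C0 else Cscal (w k) (a (S k)).

Fixpoint wprod (w : nat -> R) (n k : nat) : R :=
  match n with O => 1 | S n' => wprod w n' k * w (k + n')%nat end.

Lemma wprod_add w d e k : wprod w (d + e) k = wprod w d k * wprod w e (k + d).
Proof.
  induction e as [|e IH]; simpl; rewrite ?Nat.add_0_r; [ring|].
  rewrite Nat.add_succ_r. simpl. rewrite IH, Nat.add_assoc. ring.
Qed.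

Lemma iter_wshift p w n a k :
  (p <= k)%nat -> iterT (wshift p w) n a k = Cscal (wprod w n k) (a (k + n)%nat).
Proof.
  revert a. induction n as [|n IH]; intros a Hk.
  - simpl. rewrite Nat.add_0_r. symmetry. apply Cscal_1.
  - simpl iterT. rewrite IH by auto. unfold wshift.
    replace (Nat.ltb (k + n) p) with false by (symmetry; apply Nat.ltb_ge; lia).
    rewrite Cscal_Cscal. simpl wprod. do 2 f_equal. lia.
Qed.

Lemma iter_wshift_low p w n a k :
  (forall j, (j < p)%nat -> a j = C0) -> (k < p)%nat -> iterT (wshift p w) n a k = C0.
Proof.
  revert a. induction n as [|n IH]; intros a Ha Hk; simpl; auto.
  apply IH; auto. intros j Hj. unfold wshift.
  replace (Nat.ltb j p) with true by (symmetry; apply Nat.ltb_lt; auto). reflexivity.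
Qed.

Section WeightedShift.
Variables (p : nat) (w : nat -> R).
Hypothesis w_ge1 : forall l, (p <= l)%nat -> 1 <= w l.
Hypothesis w_ge2 : forall l, (p + 3 <= l)%nat -> 2 <= w l.

Local Notation T := (wshift p w).
Local Notation dom := (fun a => in_Bp p a /\ in_Bp p (wshift p w a)).

Lemma wshift_low a k : (k < p)%nat -> T a k = C0.
Proof.
  intro Hk. unfold wshift. replace (Nat.ltb k p) with true by (symmetry; apply Nat.ltb_lt; auto).
  reflexivity.
Qed.

Lemma wprod_ge1 n k : (p <= k)%nat -> 1 <= wprod w n k.
Proof.
  intro Hk. induction n as [|n IH]; simpl; [lra|].
  pose proof (w_ge1 (k + n) ltac:(lia)). nra.
Qed.

Lemma wprod_growth n k : (p <= k)%nat -> 4 ^ n <= 64 * wprod w n k ^ 2.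
Proof.
  intro Hk. induction n as [|n IH]; [simpl; lra|].
  simpl wprod. pose proof (wprod_ge1 n k Hk). pose proof (w_ge1 (k + n) ltac:(lia)).
  destruct (Nat.le_gt_cases (p + 3) (k + n)) as [Hfar|Hnear].
  - pose proof (w_ge2 (k + n) Hfar).
    replace (4 ^ S n) with (4 * 4 ^ n) by (simpl; ring). rewrite Rpow_mult_distr.
    assert (4 <= w (k + n)%nat ^ 2) by nra.
    assert (0 <= wprod w n k ^ 2) by apply pow2_ge_0. nra.
  - assert (H64 : 4 ^ S n <= 64).
    { destruct n as [|[|[|n]]]; simpl; try lra. exfalso; lia. }
    assert (1 <= wprod w n k * w (k + n)%nat) by nra. nra.
Qed.

Lemma wprod_inv_sq_le d k : (p <= k)%nat -> (/ wprod w d k) ^ 2 <= 64 * (1 / 2) ^ (2 * d).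
Proof.
  intro Hk. pose proof (wprod_growth d k Hk). pose proof (wprod_ge1 d k Hk).
  assert (E : (1 / 2) ^ (2 * d) = / 4 ^ d).
  { rewrite pow_half_inv, pow_mult. f_equal. f_equal. lra. }
  assert (0 < 4 ^ d) by (apply pow_lt; lra).
  rewrite E, pow_inv.
  apply Rmult_le_reg_r with (wprod w d k ^ 2 * 4 ^ d); [nra|].
  replace (/ wprod w d k ^ 2 * (wprod w d k ^ 2 * 4 ^ d)) with (4 ^ d) by (field; nra).
  replace (64 * / 4 ^ d * (wprod w d k ^ 2 * 4 ^ d)) with (64 * wprod w d k ^ 2) by (field; lra).
  lra.
Qed.

Lemma Cnorm2_iter_shift_le x e i k :
  (p <= k)%nat -> Cnorm2 (iterT T i x (k + e)%nat) <= Cnorm2 (iterT T (e + i) x k).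
Proof.
  intro Hk. rewrite !iter_wshift by lia. rewrite !Cnorm2_Cscal, wprod_add.
  replace (k + e + i)%nat with (k + (e + i))%nat by lia.
  pose proof (wprod_ge1 e k Hk). pose proof (wprod_ge1 i (k + e) ltac:(lia)).
  pose proof (Cnorm2_ge0 (x (k + (e + i))%nat)).
  assert (1 <= wprod w e k ^ 2) by nra.
  assert (0 <= wprod w i (k + e) ^ 2 * Cnorm2 (x (k + (e + i))%nat))
    by (apply Rmult_le_pos; [apply pow2_ge_0 | auto]).
  rewrite Rpow_mult_distr, Rmult_assoc.
  rewrite <- (Rmult_1_l (wprod w i (k + e) ^ 2 * _)) at 1.
  apply Rmult_le_compat_r; auto.
Qed.

Lemma iterate_in_Bp x n i :
  in_Bp p x -> in_Bp p (iterT T n x) -> (i <= n)%nat -> in_Bp p (iterT T i x).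
Proof.
  intros Hx Hn Hi. split.
  - apply sq_summable_iff_bounded. apply (bounded_sums_unshift _ (n - i)).
    apply (bounded_sums_eventually_le _ (fun k => Cnorm2 (iterT T n x k)) p).
    + intro; apply Cnorm2_ge0.
    + apply sq_summable_iff_bounded, Hn.
    + intros k Hk. pose proof (Cnorm2_iter_shift_le x (n - i) i k Hk) as Hle.
      replace (n - i + i)%nat with n in Hle by lia. exact Hle.
  - intros k Hk. apply iter_wshift_low; auto. apply Hx.
Qed.

Lemma dom_pow_wshift x n :
  in_Bp p x -> in_Bp p (iterT T n x) -> dom_pow (in_Bp p) dom T n x.
Proof.
  intros Hx Hn. apply dom_pow_of_iterates.
  - intros y Hy HTy. split; auto.
  - intros i Hi. apply (iterate_in_Bp x n i); auto.
Qed.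

Lemma wshift_dom_dense : dense_in (in_Bp p) dom.
Proof.
  intros x eps [Hx Hxlow] He. destruct (truncate_close x eps Hx He) as [L HL].
  exists (truncate L x). split; [split; split|].
  - apply sq_summable_truncate.
  - intros k Hk. unfold truncate. destruct (Nat.ltb k L); auto.
  - apply (sq_summable_finite_support _ L). intros k Hk. unfold wshift, truncate.
    replace (Nat.ltb (S k) L) with false by (symmetry; apply Nat.ltb_ge; lia).
    destruct (Nat.ltb k p); auto using Cscal_C0.
  - intros k Hk. apply wshift_low; auto.
  - apply HL. lia.
Qed.

Lemma wshift_closed n : closed_pow (in_Bp p) dom T n.
Proof.
  intros xs x y Hdom Hx Hy Hxs HTxs.
  assert (Hlim : forall k, iterT T n x k = y k).
  { intro k. destruct (Nat.lt_ge_cases k p) as [Hk|Hk].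
    - rewrite iter_wshift_low by (auto; apply Hx). symmetry. apply Hy; auto.
    - apply (Cx_lim_unique (fun j => iterT T n (xs j) k)); [|apply (conv_coord _ _ k HTxs)].
      replace (fun j => iterT T n (xs j) k) with (fun j => Cscal (wprod w n k) (xs j (k + n)%nat))
        by (extensionality j; symmetry; apply iter_wshift; auto).
      rewrite iter_wshift by auto. apply Cx_lim_Cscal, conv_coord, Hxs. }
  split; [|exact Hlim].
  apply dom_pow_wshift; auto.
  replace (iterT T n x) with y by (extensionality k; symmetry; auto). exact Hy.
Qed.

Definition periodize (N : nat) (x : cseq) : cseq := fun k =>
  if Nat.ltb k p then C0
  else let r := (p + (k - p) mod N)%nat in Cscal (/ wprod w (k - r) r) (x r).

Lemma periodize_low N x k : (k < p)%nat -> periodize N x k = C0.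
Proof.
  intro Hk. unfold periodize.
  replace (Nat.ltb k p) with true by (symmetry; apply Nat.ltb_lt; auto). reflexivity.
Qed.

Lemma periodize_eq N x k : (p <= k < p + N)%nat -> periodize N x k = x k.
Proof.
  intro Hk. unfold periodize.
  replace (Nat.ltb k p) with false by (symmetry; apply Nat.ltb_ge; lia).
  rewrite Nat.mod_small by lia. replace (p + (k - p))%nat with k by lia.
  rewrite Nat.sub_diag. simpl wprod. rewrite Rinv_1. apply Cscal_1.
Qed.

Lemma iter_periodize N x k : (1 <= N)%nat -> iterT T N (periodize N x) k = periodize N x k.
Proof.
  intro HN. destruct (Nat.lt_ge_cases k p) as [Hk|Hk].
  - rewrite iter_wshift_low; auto.
    + unfold periodize. replace (Nat.ltb k p) with true by (symmetry; apply Nat.ltb_lt; auto).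
      reflexivity.
    + intros j Hj. unfold periodize.
      replace (Nat.ltb j p) with true by (symmetry; apply Nat.ltb_lt; auto). reflexivity.
  - rewrite iter_wshift by auto. unfold periodize.
    replace (Nat.ltb k p) with false by (symmetry; apply Nat.ltb_ge; lia).
    replace (Nat.ltb (k + N) p) with false by (symmetry; apply Nat.ltb_ge; lia).
    replace (k + N - p)%nat with ((k - p) + 1 * N)%nat by lia.
    rewrite Nat.Div0.mod_add. set (r := ((k - p) mod N)%nat).
    assert (r <= k - p)%nat by apply Nat.Div0.mod_le.
    replace (k + N - (p + r))%nat with ((k - (p + r)) + N)%nat by lia.
    rewrite wprod_add. replace (p + r + (k - (p + r)))%nat with k by lia.
    rewrite Cscal_Cscal. f_equal.
    pose proof (wprod_ge1 (k - (p + r)) (p + r) ltac:(lia)).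
    pose proof (wprod_ge1 N k Hk). field. lra.
Qed.

Lemma periodize_decay N x B k :
  (1 <= N)%nat -> (forall j, Cnorm2 (x j) <= B) -> (p + N <= k)%nat ->
  Cnorm2 (periodize N x k) <= 64 * B * (1 / 2) ^ N * (1 / 2) ^ (k - (p + N)).
Proof.
  intros HN HB Hk. unfold periodize.
  replace (Nat.ltb k p) with false by (symmetry; apply Nat.ltb_ge; lia).
  set (r := ((k - p) mod N)%nat).
  assert (Hr : (r <= k - p - N)%nat).
  { unfold r. replace (k - p)%nat with ((k - p - N) + 1 * N)%nat at 1 by lia.
    rewrite Nat.Div0.mod_add. apply Nat.Div0.mod_le. }
  assert (Hr' : (r < N)%nat) by (apply Nat.mod_upper_bound; lia).
  clearbody r. rewrite Cnorm2_Cscal.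
  pose proof (wprod_inv_sq_le (k - (p + r)) (p + r) ltac:(lia)).
  pose proof (pow_half_antimono (k - p) (2 * (k - (p + r))) ltac:(lia)) as Hhalf.
  replace ((1 / 2) ^ (k - p)) with ((1 / 2) ^ N * (1 / 2) ^ (k - (p + N))) in Hhalf
    by (rewrite <- pow_add; f_equal; lia).
  pose proof (HB (p + r)%nat). pose proof (Cnorm2_ge0 (x (p + r)%nat)).
  pose proof (pow2_ge_0 (/ wprod w (k - (p + r)) (p + r))).
  apply Rle_trans with (64 * (1 / 2) ^ (2 * (k - (p + r))) * B); [|nra].
  apply Rmult_le_compat; auto.
Qed.

Lemma periodize_close N x B :
  in_Bp p x -> (1 <= N)%nat -> (forall j, Cnorm2 (x j) <= B) ->
  dist2_le (periodize N x) (truncate (p + N) x) (2 * (64 * B * (1 / 2) ^ N)).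
Proof.
  intros [_ Hxlow] HN HB.
  assert (0 <= B) by (eapply Rle_trans; [apply (Cnorm2_ge0 (x 0%nat)) | auto]).
  apply (dist2_le_geometric _ _ (p + N)).
  - apply Rmult_le_pos; [lra | apply pow_le; lra].
  - intros k Hk. unfold truncate.
    replace (Nat.ltb k (p + N)) with true by (symmetry; apply Nat.ltb_lt; auto).
    destruct (Nat.lt_ge_cases k p) as [Hkp|Hkp].
    + rewrite periodize_low, Hxlow; auto.
    + apply periodize_eq. lia.
  - intros k Hk. unfold truncate.
    replace (Nat.ltb k (p + N)) with false by (symmetry; apply Nat.ltb_ge; auto).
    rewrite Csub_C0. apply periodize_decay; auto.
Qed.

Lemma periodize_periodic N x B :
  in_Bp p x -> (1 <= N)%nat -> (forall j, Cnorm2 (x j) <= B) ->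
  in_Bp p (periodize N x) /\ dom_pow (in_Bp p) dom T N (periodize N x) /\
  iterT T N (periodize N x) = periodize N x.
Proof.
  intros Hx HN HB.
  assert (Hy : in_Bp p (periodize N x)).
  { split; [|intros; apply periodize_low; auto].
    exact (sq_summable_of_dist2_le _ _ _ (sq_summable_truncate (p + N) x)
             (periodize_close N x B Hx HN HB)). }
  assert (Hper : iterT T N (periodize N x) = periodize N x)
    by (extensionality k; apply iter_periodize; auto).
  repeat split; auto; try apply Hy.
  apply dom_pow_wshift; auto. rewrite Hper. exact Hy.
Qed.

Lemma wshift_periodic_dense :
  dense_in (in_Bp p) (fun x => in_Bp p x /\ exists j, (j >= 1)%nat /\
    dom_pow (in_Bp p) dom T j x /\ forall k, iterT T j x k = x k).
Proof.
  intros x eps Hx He.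
  destruct (sq_summable_coord_bound x (proj1 Hx)) as [B HB].
  assert (HB0 : 0 <= B) by (eapply Rle_trans; [apply (Cnorm2_ge0 (x 0%nat)) | auto]).
  destruct (truncate_close x (eps / 8) (proj1 Hx) ltac:(lra)) as [L HL].
  destruct (pow_lt_1_zero (1 / 2) ltac:(rewrite Rabs_pos_eq; lra) (eps / (512 * B + 1)))
    as [N0 HN0]; [apply Rdiv_lt_0_compat; lra|].
  set (N := max 1 (max N0 L)).
  specialize (HN0 N ltac:(lia)). rewrite Rabs_pos_eq in HN0 by (apply pow_le; lra).
  assert (Hsmall : 512 * B * (1 / 2) ^ N <= eps).
  { assert ((512 * B + 1) * (1 / 2) ^ N <= eps).
    { apply Rmult_le_reg_r with (/ (512 * B + 1)); [apply Rinv_0_lt_compat; lra|].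
      replace ((512 * B + 1) * (1 / 2) ^ N * / (512 * B + 1)) with ((1 / 2) ^ N) by (field; lra).
      unfold Rdiv in HN0. lra. }
    pose proof (pow_le (1 / 2) N ltac:(lra)). nra. }
  destruct (periodize_periodic N x B Hx ltac:(lia) HB) as [Hy [Hdom Hper]].
  exists (periodize N x). split.
  - split; auto. exists N. repeat split; auto; [lia | intro k; rewrite Hper; auto].
  - pose proof (dist2_le_triangle _ _ _ _ _ (periodize_close N x B Hx ltac:(lia) HB)
                  (HL (p + N)%nat ltac:(lia))) as Hd.
    intro M. specialize (Hd M). lra.
Qed.

Lemma decay_arith j s d :
  (s < p + j)%nat -> (4 * j + p + 7 <= d)%nat ->
  64 * (1 / 2) ^ (2 * d) * (2 * 4 ^ j) <= (1 / 2) ^ j * (1 / 2) ^ (s + d).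
Proof.
  intros Hs Hd. set (a := (7 + 2 * j)%nat).
  assert (E1 : 64 * (2 * 4 ^ j) = 2 ^ a).
  { unfold a. rewrite pow_add, pow_mult. replace (2 ^ 2) with 4 by ring. ring. }
  assert (E2 : (1 / 2) ^ (2 * d) = (1 / 2) ^ a * (1 / 2) ^ (2 * d - a))
    by (rewrite <- pow_add; f_equal; lia).
  assert (E3 : 2 ^ a * (1 / 2) ^ a = 1).
  { rewrite <- Rpow_mult_distr. replace (2 * (1 / 2)) with 1 by field. apply pow1. }
  replace (64 * (1 / 2) ^ (2 * d) * (2 * 4 ^ j))
    with (2 ^ a * (1 / 2) ^ a * (1 / 2) ^ (2 * d - a)) by (rewrite <- E1, E2; ring).
  rewrite E3, Rmult_1_l, <- pow_add. apply pow_half_antimono. lia.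
Qed.

(* Block [i] of the universal vector carries [target p i], starting at
   [block_start i]; the gaps [4 * i + p + 7] are what [decay_arith] needs. *)
Fixpoint block_start (i : nat) : nat :=
  match i with
  | O => O
  | S i' => (block_start i' + (4 * i + p + 7))%nat
  end.

Lemma block_start_mono i j : (i <= j)%nat -> (block_start i <= block_start j)%nat.
Proof. intro Hij. induction Hij; simpl; lia. Qed.

Lemma block_start_ge i : (i <= block_start i)%nat.
Proof. induction i; simpl; lia. Qed.

Fixpoint last_block_below (n K : nat) : nat :=
  match n with
  | O => O
  | S n' => if Nat.leb (block_start n) K then n else last_block_below n' K
  end.

Definition block_index (K : nat) : nat := last_block_below K K.

Lemma block_index_bounds K :
  (block_start (block_index K) <= K < block_start (S (block_index K)))%nat.
Proof.
  assert (Hgen : forall n, (K < block_start (S n))%nat ->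
    (block_start (last_block_below n K) <= K < block_start (S (last_block_below n K)))%nat).
  { induction n as [|n IH]; intro Hn; [simpl in *; lia|].
    cbn [last_block_below]. destruct (Nat.leb (block_start (S n)) K) eqn:E.
    - apply Nat.leb_le in E. lia.
    - apply Nat.leb_gt in E. apply IH, E. }
  apply Hgen. pose proof (block_start_ge (S K)). lia.
Qed.

Lemma block_index_spec i K :
  (block_start i <= K < block_start (S i))%nat -> block_index K = i.
Proof.
  intro HK. pose proof (block_index_bounds K) as HB.
  destruct (Nat.lt_total (block_index K) i) as [Hlt|[Heq|Hgt]]; auto.
  - pose proof (block_start_mono _ _ Hlt). lia.
  - pose proof (block_start_mono _ _ Hgt). lia.
Qed.

Definition universal : cseq := fun K =>
  let i := block_index K in
  Cscal (/ wprod w (block_start i) (K - block_start i)%nat) (target p i (K - block_start i)%nat).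

Lemma universal_low k : (k < p)%nat -> universal k = C0.
Proof.
  intro Hk. unfold universal. rewrite target_outside by lia. apply Cscal_C0.
Qed.

Lemma iter_universal n k i :
  (p <= k)%nat -> block_index (k + n) = i ->
  iterT T n universal k =
  Cscal (wprod w n k * / wprod w (block_start i) (k + n - block_start i)%nat)
        (target p i (k + n - block_start i)%nat).
Proof.
  intros Hk Hi. rewrite iter_wshift by auto. unfold universal. rewrite Hi. apply Cscal_Cscal.
Qed.

Lemma iter_universal_eq i k :
  (p <= k < p + i)%nat -> iterT T (block_start i) universal k = target p i k.
Proof.
  intro Hk. rewrite (iter_universal _ k i) by (try apply block_index_spec; simpl; lia).
  replace (k + block_start i - block_start i)%nat with k by lia.
  pose proof (wprod_ge1 (block_start i) k ltac:(lia)).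
  replace (wprod w (block_start i) k * / wprod w (block_start i) k) with 1 by (field; lra).
  apply Cscal_1.
Qed.

Lemma iter_universal_decay n k j :
  (p <= k)%nat -> (n <= block_start j)%nat -> block_index (k + n) = S j ->
  Cnorm2 (iterT T n universal k) <= (1 / 2) ^ S j * (1 / 2) ^ k.
Proof.
  intros Hk Hn Hj. rewrite (iter_universal n k (S j)) by auto.
  pose proof (block_index_bounds (k + n)) as HB. rewrite Hj in HB.
  set (s := (k + n - block_start (S j))%nat).
  assert (0 <= (1 / 2) ^ S j * (1 / 2) ^ k) by (apply Rmult_le_pos; apply pow_le; lra).
  destruct (Nat.lt_ge_cases s p) as [Hs|Hs].
  { rewrite target_outside, Cscal_C0, Cnorm2_C0 by lia. auto. }
  destruct (Nat.lt_ge_cases s (p + S j)) as [Hs'|Hs'].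
  2:{ rewrite target_outside, Cscal_C0, Cnorm2_C0 by lia. auto. }
  set (d := (block_start (S j) - n)%nat).
  assert (Hgap : (4 * S j + p + 7 <= d)%nat) by (unfold d; simpl block_start; lia).
  assert (Hsd : k = (s + d)%nat) by (unfold s, d; lia).
  assert (Hdn : block_start (S j) = (d + n)%nat) by (unfold d; lia).
  rewrite Hdn, wprod_add, <- Hsd.
  pose proof (wprod_ge1 d s Hs). pose proof (wprod_ge1 n k Hk).
  replace (wprod w n k * / (wprod w d s * wprod w n k)) with (/ wprod w d s) by (field; lra).
  rewrite Cnorm2_Cscal, Hsd.
  eapply Rle_trans; [|apply (decay_arith (S j) s d); auto].
  apply Rmult_le_compat; [apply pow2_ge_0 | apply Cnorm2_ge0 | |apply target_bound].
  apply wprod_inv_sq_le; auto.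
Qed.

Lemma iter_universal_tail n k i :
  (p <= k)%nat -> (n <= block_start i)%nat ->
  (forall j, (j <= i)%nat -> (p + j + block_start j <= k + n)%nat) ->
  Cnorm2 (iterT T n universal k) <= (1 / 2) ^ S i * (1 / 2) ^ k.
Proof.
  intros Hk Hn Hfar.
  destruct (Nat.le_gt_cases (block_index (k + n)) i) as [Hle|Hgt].
  - rewrite (iter_universal n k _ Hk eq_refl).
    specialize (Hfar _ Hle). rewrite target_outside, Cscal_C0, Cnorm2_C0 by lia.
    apply Rmult_le_pos; apply pow_le; lra.
  - destruct (block_index (k + n)) as [|j] eqn:E; [lia|].
    eapply Rle_trans; [apply (iter_universal_decay n k j); auto|].
    + apply (Nat.le_trans _ (block_start i)); auto. apply block_start_mono. lia.
    + apply Rmult_le_compat_r; [apply pow_le; lra|]. apply pow_half_antimono. lia.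
Qed.

Lemma iter_universal_in_Bp n : in_Bp p (iterT T n universal).
Proof.
  set (K := (p + n + block_start n)%nat).
  split; [|intros k Hk; apply iter_wshift_low; auto using universal_low].
  apply (sq_summable_of_dist2_le _ (truncate K (iterT T n universal)) (2 * 1));
    [apply sq_summable_truncate|].
  apply (dist2_le_geometric _ _ K); [lra| |].
  - intros k Hk. unfold truncate.
    replace (Nat.ltb k K) with true by (symmetry; apply Nat.ltb_lt; auto). reflexivity.
  - intros k Hk. unfold truncate.
    replace (Nat.ltb k K) with false by (symmetry; apply Nat.ltb_ge; auto). rewrite Csub_C0.
    eapply Rle_trans; [apply (iter_universal_tail n k n)|].
    + unfold K in Hk. lia.
    + apply block_start_ge.
    + intros j Hj. pose proof (block_start_mono j n Hj). unfold K in Hk. lia.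
    + pose proof (pow_half_antimono 0 (S n) ltac:(lia)) as Hle1.
      pose proof (pow_half_antimono (k - K) k ltac:(lia)).
      pose proof (pow_le (1 / 2) k ltac:(lra)). rewrite pow_O in Hle1. nra.
Qed.

Lemma universal_orbit_dense :
  dense_in (in_Bp p) (fun x => exists n, forall k, iterT T n universal k = x k).
Proof.
  intros x eps Hx He.
  destruct (pow_lt_1_zero (1 / 2) ltac:(rewrite Rabs_pos_eq; lra) (eps / 8)) as [J HJ]; [lra|].
  destruct (target_dense p x (eps / 4) J Hx ltac:(lra)) as [i [HiJ Hi]].
  exists (iterT T (block_start i) universal). split; [exists (block_start i); auto|].
  assert (Hclose : dist2_le (iterT T (block_start i) universal) (target p i) (2 * (1 / 2) ^ S i)).
  { apply (dist2_le_geometric _ _ (p + i)); [apply pow_le; lra| |].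
    - intros k Hk. destruct (Nat.lt_ge_cases k p).
      + rewrite iter_wshift_low, target_outside; auto using universal_low.
      + apply iter_universal_eq. lia.
    - intros k Hk. rewrite (target_outside p i k), Csub_C0 by lia.
      eapply Rle_trans; [apply (iter_universal_tail _ k i); auto; try lia|].
      + intros j Hj. pose proof (block_start_mono j i Hj). lia.
      + apply Rmult_le_compat_l; [apply pow_le; lra|]. apply pow_half_antimono. lia. }
  pose proof (dist2_le_triangle _ _ _ _ _ Hclose Hi) as Hd.
  specialize (HJ J (le_n _)). rewrite Rabs_pos_eq in HJ by (apply pow_le; lra).
  pose proof (pow_half_antimono J (S i) ltac:(lia)).
  intro M. specialize (Hd M). lra.
Qed.

Theorem wshift_chaotic : chaotic (in_Bp p) dom T.
Proof.
  split; [intros x Hx; apply Hx|].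
  split; [exact wshift_dom_dense|].
  split; [intros n _; apply wshift_closed|].
  split; [|exact wshift_periodic_dense].
  exists universal. split; [|exact universal_orbit_dense].
  intros n _. apply dom_pow_wshift; [exact (iter_universal_in_Bp 0) | apply iter_universal_in_Bp].
Qed.

End WeightedShift.

(** * The operator of the theorem *)

Lemma omega_sq_ge p m l : (1 <= m)%nat -> (p <= l)%nat -> INR (S l) <= omega p m l ^ 2.
Proof.
  intros Hm Hl. unfold omega.
  assert (HB : 0 < INR (fact (l - p))) by (apply lt_0_INR, lt_O_fact).
  assert (HA : 0 <= INR (fact l * fact (l + m))) by apply pos_INR.
  unfold Rdiv. rewrite Rpow_mult_distr, pow_inv, <- Rsqr_pow2, Rsqr_sqrt by auto.
  apply Rmult_le_reg_r with (INR (fact (l - p)) ^ 2); [nra|].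
  rewrite Rmult_assoc, Rinv_l, Rmult_1_r by nra.
  rewrite <- pow_INR, <- mult_INR. apply le_INR.
  assert (H1 : (fact (l - p) <= fact l)%nat) by (apply fact_le; lia).
  assert (H2 : (S l * fact l <= fact (l + m))%nat)
    by (change (S l * fact l)%nat with (fact (S l)); apply fact_le; lia).
  assert (H3 : (fact (l - p) * (S l * fact (l - p)) <= fact l * fact (l + m))%nat).
  { apply Nat.mul_le_mono; [exact H1|]. eapply Nat.le_trans; [|exact H2].
    apply Nat.mul_le_mono_l. exact H1. }
  simpl. lia.
Qed.

Lemma omega_ge1 p m l : (1 <= m)%nat -> (p <= l)%nat -> 1 <= omega p m l.
Proof.
  intros Hm Hl. pose proof (omega_sq_ge p m l Hm Hl) as Hsq. rewrite S_INR in Hsq.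
  assert (0 <= omega p m l).
  { unfold omega. apply Rmult_le_pos; [apply sqrt_pos|].
    left. apply Rinv_0_lt_compat, lt_0_INR, lt_O_fact. }
  pose proof (pos_INR l). nra.
Qed.

Lemma omega_ge2 p m l : (1 <= m)%nat -> (p + 3 <= l)%nat -> 2 <= omega p m l.
Proof.
  intros Hm Hl. pose proof (omega_sq_ge p m l Hm ltac:(lia)).
  pose proof (omega_ge1 p m l Hm ltac:(lia)).
  assert (4 <= INR (S l)) by (replace 4 with (INR 4) by (simpl; lra); apply le_INR; lia).
  nra.
Qed.

Theorem theorem3p5 (p m : nat) (hm : (1 <= m)%nat) :
  chaotic (in_Bp p) (dom_H p m) (Hbreve p m).
Proof.
  exact (wshift_chaotic p (omega p m) (fun l => omega_ge1 p m l hm) (fun l => omega_ge2 p m l hm)).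
Qed.
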